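(* Let $n\ge 1$ and $0\leq k\leq \lfloor (n-1)/2\rfloor$. Let $H_k$ be the graph with vertex set $\{u_1,\dots,u_n,v_1,\dots,v_n\}$ whose edges are: $u_iv_i$ for all $1\le i\le n$; for each $1\le t\le k$, the edges $u_{2t-1}u_{2t}$ and $v_{2t-1}v_{2t}$; and for every other pair $i<j$ (i.e. $\{i,j\}\neq\{2t-1,2t\}$ for all $t\le k$), the edges $u_iv_j$ and $v_iu_j$. Then $f(H_k)=n-k-1$. In particular, for $k=\lfloor (n-1)/2\rfloor$, $f(H_k)=\lfloor n/2\rfloor$, while $F(H_k)=n-1$.
   Context: All graphs are finite and simple. For a perfect matching $M$ of $G$, a forcing set of $M$ is a subset $S\subseteq M$ contained in no other perfect matching of $G$; $f(G,M)$ is the minimum size of a forcing set of $M$. $f(G)$ and $F(G)$ are the minimum and maximum of $f(G,M)$ over all perfect matchings $M$ of $G$. *)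

From mathcomp Require Import all_boot all_order.
Set Implicit Arguments. Unset Strict Implicit. Unset Printing Implicit Defensive.

Section Matchings.
Variables (T : finType) (e : rel T).

Definition is_edge (x : {set T}) : bool :=
  [exists u, exists v, e u v && (x == [set u; v])].

Definition perfect_matching (M : {set {set T}}) : bool :=
  (M \subset [set x | is_edge x]) &&
  [forall v, #|[set x in M | v \in x]| == 1].

Definition forcing (M S : {set {set T}}) : bool :=
  (S \subset M) &&
  [forall M' : {set {set T}}, (perfect_matching M' && (S \subset M')) ==> (M' == M)].

(* f(G,M): minimum size of a forcing set of M (M itself is forcing) *)
Definition fGM (M : {set {set T}}) : nat :=
  \big[minn/#|M|]_(S : {set {set T}} | forcing M S) #|S|.

Definition f_min : nat :=
  \big[minn/#|T|]_(M : {set {set T}} | perfect_matching M) fGM M.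

Definition F_max : nat :=
  \max_(M : {set {set T}} | perfect_matching M) fGM M.

End Matchings.

(* The graph H_k on vertices (false,i) = u_{i+1}, (true,i) = v_{i+1}, i : 'I_n
   (0-indexed). The special pairs {2t-1,2t}, 1<=t<=k (1-indexed) become
   {2s,2s+1}, s<k (0-indexed). *)
Definition special_pair (k : nat) (i j : nat) : bool :=
  [&& i != j, i./2 == j./2 & i./2 < k].

Definition Hk_adj (n k : nat) : rel (bool * 'I_n) :=
  fun x y =>
    if x.1 == y.1 then special_pair k x.2 y.2
    else (x.2 == y.2) || ~~ special_pair k x.2 y.2.
Arguments Hk_adj n k : clear implicits.

From mathcomp Require Import all_boot all_order zify.
Set Implicit Arguments. Unset Strict Implicit. Unset Printing Implicit Defensive.

(* The general tool is the alternating square: if {x,y} and {z,w} are edges of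
   a perfect matching M and xz, yw are edges of the graph, swapping them gives
   another perfect matching.  Hence the edges of M outside a forcing set
   contain no alternating square; conversely deleting one edge of M always
   leaves a forcing set. *)

Lemma bigmin_le (I : finType) (P : pred I) (F : I -> nat) (x : nat) (j : I) :
  P j -> \big[minn/x]_(i | P i) F i <= F j.
Proof.
move=> Pj; have : j \in index_enum I by rewrite mem_index_enum.
elim: (index_enum I) => [|a r IHr] //; rewrite inE big_cons => /orP [/eqP <-|/IHr jr].
  by rewrite Pj geq_minl.
by case: (P a) => //; rewrite geq_min jr orbT.
Qed.

Lemma bigmin_ge (I : finType) (P : pred I) (F : I -> nat) (x m : nat) :
  m <= x -> (forall i, P i -> m <= F i) -> m <= \big[minn/x]_(i | P i) F i.
Proof.
move=> mx mF; apply: (big_ind (fun y => m <= y)) => // a b ma mb.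
by rewrite leq_min ma mb.
Qed.

Section Matchings.
Variables (T : finType) (e : rel T).
Hypothesis e_irr : irreflexive e.

Lemma edgeP x : is_edge e x -> exists u v, [/\ e u v, u != v & x = [set u; v]].
Proof.
move/existsP=> [u /existsP [v /andP [euv /eqP ->]]]; exists u, v; split => //.
by apply: contraTneq euv => ->; rewrite e_irr.
Qed.

Lemma edgeI u v : e u v -> is_edge e [set u; v].
Proof. by move=> euv; apply/existsP; exists u; apply/existsP; exists v; rewrite euv eqxx. Qed.

Lemma edge_card x : is_edge e x -> #|x| = 2.
Proof. by case/edgeP => u [v [_ uv ->]]; rewrite cards2 uv. Qed.

Lemma pm_edge M x : perfect_matching e M -> x \in M -> is_edge e x.
Proof. by case/andP => /subsetP sub _ /sub; rewrite inE. Qed.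

Lemma pm_cover M v : perfect_matching e M -> exists2 x, x \in M & v \in x.
Proof.
case/andP => _ /forallP /(_ v) /cards1P [x Mv].
have : x \in [set x in M | v \in x] by rewrite Mv set11.
by rewrite inE => /andP []; exists x.
Qed.

Lemma pm_uniq M v x y : perfect_matching e M -> x \in M -> y \in M ->
  v \in x -> v \in y -> x = y.
Proof.
case/andP => _ /forallP /(_ v) /cards1P [z Mv] xM yM vx vy.
have : x \in [set x in M | v \in x] by rewrite inE xM vx.
have : y \in [set x in M | v \in x] by rewrite inE yM vy.
by rewrite Mv !inE => /eqP -> /eqP ->.
Qed.

Lemma pm_intro (M : {set {set T}}) : (forall x, x \in M -> is_edge e x) ->
  (forall v, exists2 x, x \in M & v \in x) ->
  (forall v x y, x \in M -> y \in M -> v \in x -> v \in y -> x = y) ->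
  perfect_matching e M.
Proof.
move=> Medge Mcover Muniq; apply/andP; split.
  by apply/subsetP => x xM; rewrite inE Medge.
apply/forallP => v; apply/cards1P; have [x xM vx] := Mcover v; exists x.
apply/setP => y; rewrite !inE; apply/andP/eqP => [[yM vy]|->] //.
exact: Muniq vy vx.
Qed.

(* Double counting of vertex-edge incidences: #|M| * 2 = #|T|. *)
Lemma pm_card M : perfect_matching e M -> #|M| * 2 = #|T|.
Proof.
move=> pM; have deg v : #|[set x in M | v \in x]| = 1.
  by case/andP: pM => _ /forallP /(_ v) /eqP.
transitivity (\sum_(x in M) \sum_(v : T) (v \in x : nat)).
  rewrite -sum_nat_const; apply: eq_bigr => x xM.
  by rewrite -(edge_card (pm_edge pM xM)) -sum1_card big_mkcond.
rewrite exchange_big /= -(sum1_card T); apply: eq_bigr => v _.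
rewrite -(deg v) -sum1_card [RHS]big_mkcond [LHS]big_mkcond /=; apply: eq_bigr => x _.
by rewrite inE; case: (x \in M); case: (v \in x).
Qed.

Lemma pm_sub_eq M M' : perfect_matching e M -> perfect_matching e M' ->
  M \subset M' -> M' = M.
Proof.
move=> pM pM' sub; apply/setP => x; apply/idP/idP => [xM'|/(subsetP sub)//].
have [u [v [_ _ xE]]] := edgeP (pm_edge pM' xM').
have [y yM uy] := pm_cover u pM.
by rewrite (pm_uniq pM' xM' (subsetP sub _ yM) _ uy) // xE set21.
Qed.

Lemma pm_pair_neq M u v : perfect_matching e M -> [set u; v] \in M -> u != v.
Proof.
move=> pM /(pm_edge pM) /edge_card.
by case: eqVneq => // ->; rewrite setUid cards1.
Qed.

Lemma alternating_square M x y z w : perfect_matching e M ->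
  [set x; y] \in M -> [set z; w] \in M -> [set x; y] != [set z; w] ->
  e x z -> e y w ->
  exists2 M', perfect_matching e M' & M' != M /\
    {subset M :\ [set x; y] :\ [set z; w] <= M'}.
Proof.
move=> pM xyM zwM xy_zw exz eyw.
pose X := [set x; y] :|: [set z; w].
have disj a : a \in [set x; y] -> a \in [set z; w] -> False.
  by move=> ax az; move/eqP: xy_zw; apply; apply: pm_uniq pM xyM zwM ax az.
have distinct a b : a \in [set x; y] -> b \in [set z; w] -> a != b.
  by move=> ax bz; apply/eqP => eab; apply: (disj a) => //; rewrite eab.
have xz := distinct _ _ (set21 x y) (set21 z w).
have xw := distinct _ _ (set21 x y) (set22 z w).
have yz := distinct _ _ (set22 x y) (set21 z w).
have yw := distinct _ _ (set22 x y) (set22 z w).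
have xy := pm_pair_neq pM xyM; have zw := pm_pair_neq pM zwM.
pose swapped := [set [set x; z]; [set y; w]].
pose M' := M :\ [set x; y] :\ [set z; w] :|: swapped.
have swappedX t v : t \in swapped -> v \in t -> v \in X.
  by rewrite !inE => /orP [] /eqP ->; rewrite /X !inE => /orP [] /eqP ->; rewrite !eqxx ?orbT.
have oldX t v : t \in M -> t != [set x; y] -> t != [set z; w] -> v \in t -> v \notin X.
  move=> tM txy tzw vt; rewrite inE; apply/norP; split.
    by apply: contra txy => vxy; rewrite (pm_uniq pM tM xyM vt vxy).
  by apply: contra tzw => vzw; rewrite (pm_uniq pM tM zwM vt vzw).
(* the swapped edges {x,z} and {y,w} are disjoint as x, y, z, w are distinct *)
have swapped_uniq v t1 t2 : t1 \in swapped -> t2 \in swapped -> v \in t1 -> v \in t2 -> t1 = t2.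
  rewrite !inE => /orP [] /eqP -> /orP [] /eqP -> //;
  by rewrite !inE => /orP [] /eqP -> /orP [] /eqP E; move: E xy xz yw zw xw yz => ->; rewrite eqxx.
have swapped_cover v : v \in X -> exists2 s, s \in swapped & v \in s.
  rewrite /X !inE -!orbA => /or4P [] /eqP ->;
  [exists [set x; z] | exists [set y; w] | exists [set x; z] | exists [set y; w]];
  by rewrite !inE ?eqxx ?orbT.
exists M'; last split.
- apply: pm_intro.
  + move=> t; rewrite !inE => /orP [/andP [_ /andP [_ tM]]|/orP [] /eqP ->].
    * exact: pm_edge pM tM.
    * exact: edgeI.
    * exact: edgeI.
  + move=> v; have [t tM vt] := pm_cover v pM.
    have [tN|] := boolP ((t == [set x; y]) || (t == [set z; w])).
      have vX : v \in X by case/orP: tN => /eqP tE; rewrite /X inE -tE vt ?orbT.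
      have [s ss vs] := swapped_cover v vX.
      by exists s; rewrite // inE ss orbT.
    by rewrite negb_or => /andP [txy tzw]; exists t; rewrite // !inE tM txy tzw.
  + move=> v t1 t2; rewrite [t1 \in _]in_setU [t2 \in _]in_setU !in_setD1.
    move=> /orP [/and3P [t1zw t1xy t1M]|t1s] /orP [/and3P [t2zw t2xy t2M]|t2s] vt1 vt2.
    * exact: pm_uniq pM t1M t2M vt1 vt2.
    * by move: (oldX _ _ t1M t1xy t1zw vt1); rewrite (swappedX _ _ t2s vt2).
    * by move: (oldX _ _ t2M t2xy t2zw vt2); rewrite (swappedX _ _ t1s vt1).
    * exact: swapped_uniq vt1 vt2.
- apply: contraNneq xz => EM.
  have xzM : [set x; z] \in M by rewrite -EM !inE eqxx orbT.
  have := pm_uniq pM xzM xyM (set21 _ _) (set21 _ _).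
  move/setP/(_ z); rewrite !inE eqxx orbT => /esym /orP [/eqP -> //|].
  by rewrite eq_sym (negbTE yz).
- by move=> t tM; rewrite inE tM.
Qed.

(* The edges of M outside a forcing set S contain no alternating square:
   otherwise exchanging it would give a second perfect matching containing S. *)
Lemma forcing_no_square M S x y z w : perfect_matching e M -> forcing e M S ->
  [set x; y] \in M :\: S -> [set z; w] \in M :\: S ->
  [set x; y] != [set z; w] -> e x z -> e y w -> False.
Proof.
move=> pM /andP [SM /forallP forcingS] /setDP [xyM xyS] /setDP [zwM zwS] xy_zw exz eyw.
have [M' pM' [M'M keep]] := alternating_square pM xyM zwM xy_zw exz eyw.
move: (forcingS M'); rewrite pM' (negbTE M'M) implybF => /negP; apply.
apply/subsetP => t tS; apply: keep; rewrite !in_setD1 (subsetP SM _ tS) andbT.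
by apply/andP; split; apply: contraTneq tS => ->.
Qed.

(* Removing one edge x from M leaves a forcing set: in any perfect matching
   containing M :\ x, the two ends of x can only be matched to each other. *)
Lemma forcing_minus1 M x : perfect_matching e M -> x \in M -> forcing e M (M :\ x).
Proof.
move=> pM xM; apply/andP; split; first exact: subsetDl.
apply/forallP => M'; apply/implyP => /andP [pM' sub]; apply/eqP.
apply: (pm_sub_eq pM pM'); apply/subsetP => t tM.
have [->|tx] := eqVneq t x; last by apply: (subsetP sub); rewrite !inE tx.
have [u [v [_ _ xE]]] := edgeP (pm_edge pM xM).
have ux : u \in x by rewrite xE set21.
have [t' t'M' ut'] := pm_cover u pM'.
have t'x : t' \subset x.
  apply/subsetP => q qt'; apply: contraT => qx.
  have [s sM qs] := pm_cover q pM.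
  have sx : s != x by apply: contraNneq qx => <-.
  have sM' : s \in M' by apply: (subsetP sub); rewrite !inE sx.
  have us : u \in s by rewrite (pm_uniq pM' sM' t'M' qs qt').
  by move: sx; rewrite (pm_uniq pM sM xM us ux) eqxx.
suff -> : x = t' by [].
apply/eqP; rewrite eq_sym eqEcard t'x.
by rewrite (edge_card (pm_edge pM' t'M')) (edge_card (pm_edge pM xM)).
Qed.

Lemma forcing_sub M S : forcing e M S -> S \subset M.
Proof. by case/andP. Qed.

Lemma fGM_le (M S : {set {set T}}) : forcing e M S -> fGM e M <= #|S|.
Proof. exact: bigmin_le. Qed.

Lemma fGM_ge (M : {set {set T}}) (m : nat) :
  m <= #|M| -> (forall S, forcing e M S -> m <= #|S|) -> m <= fGM e M.
Proof. exact: bigmin_ge. Qed.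

Hypothesis e_sym : symmetric e.

Lemma pm_partner M p : perfect_matching e M -> exists2 q, e p q & [set p; q] \in M.
Proof.
move=> pM; have [x xM px] := pm_cover p pM.
have [u [v [euv _ xE]]] := edgeP (pm_edge pM xM).
move: px; rewrite xE !inE => /orP [] /eqP ->; first by exists v; rewrite -?xE.
by exists u; rewrite 1?e_sym // setUC -xE.
Qed.

Lemma pm_pair_adj M u v : perfect_matching e M -> [set u; v] \in M -> e u v.
Proof.
move=> pM uvM; have uv := pm_pair_neq pM uvM.
have [a [b [eab _ uvE]]] := edgeP (pm_edge pM uvM).
have : u \in [set a; b] by rewrite -uvE set21.
have : v \in [set a; b] by rewrite -uvE set22.
rewrite !inE => /orP [] /eqP vE /orP [] /eqP uE; move: uv eab; rewrite vE uE ?eqxx //.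
by rewrite e_sym.
Qed.
End Matchings.

Definition twin (i : nat) : nat := if odd i then i.-1 else i.+1.

Lemma twinK : involutive twin.
Proof.
by move=> i; rewrite /twin; case: (boolP (odd i)) => [oi|ei]; rewrite ?oi ?(negbTE ei); case: ifP; lia.
Qed.

Lemma special_pairE k i j : special_pair k i j = (i < 2 * k) && (j == twin i).
Proof. by rewrite /special_pair /twin; case: ifP => odd_i; apply/idP/idP; lia. Qed.

Lemma special_pair_sym k i j : special_pair k i j = special_pair k j i.
Proof. by rewrite /special_pair; apply/idP/idP; lia. Qed.

Section Hk.
Variables n k : nat.
Local Notation V := (bool * 'I_n)%type.
Local Notation E := (Hk_adj n k).

Lemma HkE b i c j : E (b, i) (c, j) =
  if b == c then special_pair k i j else (i == j) || ~~ special_pair k i j.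
Proof. by []. Qed.

Lemma Hk_irr : irreflexive E.
Proof. by case=> b i; rewrite HkE eqxx /special_pair eqxx. Qed.

Lemma Hk_sym : symmetric E.
Proof.
case=> b i [c j]; rewrite !HkE eq_sym special_pair_sym.
by case: ifP => _; rewrite // eq_sym.
Qed.

(* H_k has 2n vertices, so every perfect matching has n edges. *)
Lemma Hk_pm_card M : perfect_matching E M -> #|M| = n.
Proof. by move/(pm_card Hk_irr); rewrite card_prod card_bool card_ord; lia. Qed.

(* The perfect matching M0 = {u_i v_i} needs n - 1 forcing edges: any two of
   its edges u_i v_i, u_j v_j form an alternating square, through u_i u_j and
   v_i v_j if {i, j} is special and through u_i v_j and v_i u_j otherwise. *)
Definition rung (i : 'I_n) : {set V} := [set (false, i); (true, i)].
Definition M0 : {set {set V}} := [set rung i | i : 'I_n].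

Lemma M0_pm : perfect_matching E M0.
Proof.
apply: pm_intro.
- by move=> x /imsetP [i _ ->]; apply: edgeI; rewrite HkE /= eqxx.
- by case=> b i; exists (rung i); rewrite ?imset_f //; case: b; rewrite !inE eqxx ?orbT.
- move=> [b i] x y /imsetP [j _ ->] /imsetP [l _ ->].
  by rewrite !inE !xpair_eqE => /orP [] /andP [_ /eqP <-] /orP [] /andP [_ /eqP <-].
Qed.

Lemma M0_forcing_ge S : forcing E M0 S -> n - 1 <= #|S|.
Proof.
move=> fS; rewrite leqNgt; apply/negP => small.
have : 1 < #|M0 :\: S|.
  have := cardsID S M0; rewrite (setIidPr (forcing_sub fS)) (Hk_pm_card M0_pm).
  by set d := #|M0 :\: S|; lia.
case/card_gt1P => x [y [xD yD xy]].
have [i xE] : exists i, x = rung i by case/setDP: xD => /imsetP [i _ ->] _; exists i.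
have [j yE] : exists j, y = rung j by case/setDP: yD => /imsetP [j _ ->] _; exists j.
rewrite xE yE in xD yD xy.
have [sp|nsp] := boolP (special_pair k i j).
  by apply: (forcing_no_square Hk_irr M0_pm fS xD yD xy); rewrite HkE /= sp.
have yD' : [set (true, j); (false, j)] \in M0 :\: S by rewrite setUC.
apply: (forcing_no_square Hk_irr M0_pm fS xD yD' _); rewrite ?HkE /= ?nsp ?orbT //.
by rewrite [X in _ != X]setUC.
Qed.

(* Deleting one edge always gives a forcing set, so F(H_k) = n - 1. *)
Lemma Fmax_Hk : 1 <= n -> F_max E = n - 1.
Proof.
move=> n_gt0; apply/eqP; rewrite eqn_leq; apply/andP; split.
  apply/bigmax_leqP => M pM.
  have [x xM _] := pm_cover (false, Ordinal n_gt0) pM.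
  apply: leq_trans (fGM_le (forcing_minus1 Hk_irr pM xM)) _.
  by have := cardsD1 x M; rewrite xM (Hk_pm_card pM); lia.
apply: leq_trans (leq_bigmax_cond M0 M0_pm).
by apply: fGM_ge; [rewrite (Hk_pm_card M0_pm) leq_subr | exact: M0_forcing_ge].
Qed.

End Hk.
Arguments Hk_irr {n k}.
Arguments Hk_sym {n k}.

(* Upper bound f(H_k) <= n - k - 1.  Let M* match u_{2s} u_{2s+1} and
   v_{2s} v_{2s+1} for s < k and u_i v_i for i >= 2k.  Call "low" the 2k+2
   vertices u_0, ..., u_{2k}, v_{2k}; they are covered by k+1 edges of M*, and
   S* = the other n-k-1 edges of M* forces M*: inside the low vertices, the
   only edges outside M* join v_{2k} to some u_j, j < 2k, and matching v_{2k}
   that way would leave the twin of u_j without any partner. *)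
Section UpperBound.
Variables n k : nat.
Hypothesis hk : 2 * k < n.
Local Notation V := (bool * 'I_n)%type.
Local Notation E := (Hk_adj n k).

Definition mate (p : V) : V :=
  if p.2 < 2 * k then (p.1, insubd p.2 (twin p.2)) else (~~ p.1, p.2).

Lemma val_twin (i : 'I_n) : i < 2 * k -> insubd i (twin i) = twin i :> nat.
Proof. by move=> ik; rewrite insubdK // -topredE /= /twin; case: ifP => _; lia. Qed.

Lemma mateK : involutive mate.
Proof.
case=> b i; rewrite /mate /=; have [ik|ki] := ltnP i (2 * k); last first.
  by rewrite ltnNge ki /= negbK.
have tk : twin i < 2 * k by rewrite /twin; case: ifP => odd_i; lia.
rewrite /= (val_twin ik) tk; congr (_, _); apply: val_inj => /=.
by rewrite twinK val_insubd ltn_ord.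
Qed.

Lemma mate_edge p : E p (mate p).
Proof.
case: p => b i; rewrite /mate /=; have [ik|ki] := ltnP i (2 * k).
  by rewrite HkE eqxx special_pairE ik val_twin // eqxx.
by rewrite /Hk_adj /= eqxx; case: b.
Qed.

Lemma mate_neq p : mate p != p.
Proof. by have := mate_edge p; apply: contraTneq => ->; rewrite Hk_irr. Qed.

Definition Mstar : {set {set V}} := [set [set p; mate p] | p : V].

Lemma mate_pair p v : v \in [set p; mate p] -> [set p; mate p] = [set v; mate v].
Proof. by rewrite !inE => /orP [] /eqP -> //; rewrite mateK setUC. Qed.

Lemma Mstar_pm : perfect_matching E Mstar.
Proof.
apply: pm_intro.
- by move=> x /imsetP [p _ ->]; exact: edgeI (mate_edge p).
- by move=> v; exists [set v; mate v]; [apply/imsetP; exists v | rewrite set21].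
- by move=> v x y /imsetP [p _ ->] /imsetP [q _ ->] /mate_pair -> /mate_pair ->.
Qed.

Definition low (p : V) : bool := if p.1 then p.2 == 2 * k :> nat else p.2 <= 2 * k.

Lemma low_mate p : low (mate p) = low p.
Proof.
case: p => b i; rewrite /mate /low /=; have [ik|ki] := ltnP i (2 * k); rewrite /= ?val_twin //.
  by case: b; rewrite /twin; case: ifP => odd_i; apply/idP/idP; lia.
by case: b => /=; apply/idP/idP; lia.
Qed.

Definition Sstar : {set {set V}} := [set x in Mstar | [forall p in x, ~~ low p]].

Lemma Sstar_sub : Sstar \subset Mstar.
Proof. by apply/subsetP => x; rewrite inE => /andP []. Qed.

(* The k+1 edges of M* at u_0, u_2, ..., u_{2k} are distinct and not in S*. *)
Lemma Sstar_card : #|Sstar| <= n - k - 1.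
Proof.
have even_lt (s : 'I_k.+1) : 2 * s < n by have := ltn_ord s; lia.
pose u (s : 'I_k.+1) : V := (false, Ordinal (even_lt s)).
pose low_edge s := [set u s; mate (u s)].
have low_u s : low (u s) by rewrite /low /=; have := ltn_ord s; lia.
have inj : injective low_edge.
  move=> s t st; apply/val_inj => /=; have : u t \in low_edge s by rewrite st set21.
  rewrite !inE /mate /=; case: ltnP => sk; rewrite !xpair_eqE /= -!val_eqE /=.
    by rewrite val_twin //= /twin; case: ifP => odd_s; lia.
  lia.
have sub : [set low_edge s | s in setT] \subset Mstar :\: Sstar.
  apply/subsetP => x /imsetP [s _ ->].
  have inM : low_edge s \in Mstar by apply/imsetP; exists (u s).
  rewrite in_setD inM andbT inE inM /= negb_forall; apply/existsP; exists (u s).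
  by rewrite set21 low_u.
have := subset_leq_card sub; rewrite card_imset // cardsT card_ord.
have := cardsID Sstar Mstar; rewrite (setIidPr Sstar_sub) (Hk_pm_card Mstar_pm).
by set d := #|Mstar :\: Sstar|; lia.
Qed.

Definition top : 'I_n := Ordinal hk.
Definition vtop : V := (true, top).
Definition utop : V := (false, top).

Lemma mate_vtop : mate vtop = utop.
Proof. by rewrite /mate /= ltnn. Qed.

Lemma mate_utop : mate utop = vtop.
Proof. by rewrite -mate_vtop mateK. Qed.

Lemma low_adj p q : low p -> low q -> E p q -> [|| q == mate p, p == vtop | q == vtop].
Proof.
have vtopE b (i : 'I_n) : ((b, i) == vtop) = b && (i == 2 * k :> nat).
  by rewrite /vtop xpair_eqE -val_eqE; case: b.
case: p q => [[] i] [[] j]; rewrite /low /= => li lj; rewrite !vtopE /= ?li ?lj ?orbT //.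
rewrite HkE /= special_pairE /mate => /andP [ik /eqP jE] /=.
by rewrite ik xpair_eqE /= -val_eqE /= val_twin // jE eqxx.
Qed.

Section Forcing.
Variable M : {set {set V}}.
Hypotheses (pM : perfect_matching E M) (SM : Sstar \subset M).

(* A vertex outside the low set keeps its M*-partner, since its M*-edge lies in S*. *)
Lemma high_partner p q : ~~ low p -> [set p; q] \in M -> [set p; q] = [set p; mate p].
Proof.
move=> hp pqM; have pS : [set p; mate p] \in Sstar.
  rewrite inE; apply/andP; split; first by apply/imsetP; exists p.
  apply/forallP => r; apply/implyP.
  by rewrite !inE => /orP [] /eqP ->; rewrite ?low_mate.
exact: pm_uniq pM pqM (subsetP SM _ pS) (set21 _ _) (set21 _ _).
Qed.

Lemma low_partner p q : low p -> [set p; q] \in M -> low q.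
Proof.
move=> lp pqM; apply: contraT => hq; rewrite setUC in pqM.
have := high_partner hq pqM => /setP /(_ p); rewrite !inE eqxx orbT.
by move/esym => /orP [] /eqP pE; move: lp hq; rewrite pE ?low_mate => ->.
Qed.

(* v_{2k} is matched to u_{2k}: if it were matched to u_j with j < 2k, the
   twin of u_j could only be matched to u_j or v_{2k}, both already taken. *)
Lemma vtop_partner q : [set vtop; q] \in M -> q = utop.
Proof.
move=> vqM; have lq : low q by apply: low_partner vqM; rewrite /low /= eqxx.
have vq := pm_pair_neq Hk_irr pM vqM.
case: q lq vqM vq => [[] j] lj vqM vq.
  by move: vq lj; rewrite /vtop /low xpair_eqE -val_eqE /= eq_sym => /negbTE ->.
have [jk|kj] := ltnP j (2 * k); last first.
  by move: lj; rewrite /low /= => lj; apply/eqP; rewrite /utop xpair_eqE -val_eqE /= eqn_leq kj lj.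
set r := mate (false, j).
have lr : low r by rewrite low_mate.
have [s ers rsM] := pm_partner Hk_irr Hk_sym r pM.
have s_vq : s \in [set vtop; (false, j)].
  case/or3P: (low_adj lr (low_partner lr rsM) ers) => [/eqP ->|rv|/eqP ->].
  - by rewrite mateK set22.
  - by move: rv; rewrite /r /mate /= jk.
  - by rewrite set21.
have := pm_uniq pM rsM vqM (set22 r s) s_vq.
move/setP/(_ r); rewrite !inE eqxx /= => /esym /orP [] /eqP rE.
  by move: rE; rewrite /r /mate /= jk.
by move: (mate_neq (false, j)); rewrite -/r rE eqxx.
Qed.

Lemma pm_edge_mate p q : [set p; q] \in M -> [set p; q] = [set p; mate p].
Proof.
move=> pqM; have [lp|hp] := boolP (low p); last exact: high_partner.
have /or3P [/eqP ->|/eqP pE|/eqP qE] :=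
  low_adj lp (low_partner lp pqM) (pm_pair_adj Hk_irr Hk_sym pM pqM) => //.
  by move: pqM; rewrite pE mate_vtop => /vtop_partner ->.
by move: pqM; rewrite qE setUC => /vtop_partner ->; rewrite mate_utop setUC.
Qed.
End Forcing.

Lemma Sstar_forcing : forcing E Mstar Sstar.
Proof.
apply/andP; split; first exact: Sstar_sub.
apply/forallP => M; apply/implyP => /andP [pM SM]; apply/eqP/esym.
apply: (pm_sub_eq Hk_irr pM Mstar_pm); apply/subsetP => x xM.
have [p [q [_ _ xE]]] := edgeP Hk_irr (pm_edge pM xM).
by apply/imsetP; exists p; rewrite // xE (pm_edge_mate pM SM) -?xE.
Qed.

End UpperBound.

(* Lower bound f(H_k) >= n - k - 1.  Let S force M and D = M \ S; D contains
   no alternating square.  Edges of H_k are "flat" (u_i u_j or v_i v_j, with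
   {i, j} special) or "cross" (u_a v_d, with {a, d} not special).  Two cross
   edges u_a1 v_d1, u_a2 v_d2 of D must be "linked": {a1, d2} or {a2, d1} is
   special, otherwise u_a1 v_d2, u_a2 v_d1 close an alternating square. *)
Definition linked (k a1 d1 a2 d2 : nat) : bool :=
  special_pair k a1 d2 || special_pair k a2 d1.

(* Linking needs a special pair, hence an index below 2k. *)
Lemma linked_low k a1 d1 a2 d2 : linked k a1 d1 a2 d2 -> (a1./2 < k) || (a2./2 < k).
Proof. by rewrite /linked /special_pair; lia. Qed.

Lemma linked3 k (a1 a2 a3 d1 d2 d3 : nat) :
  a1 != a2 -> a1 != a3 -> a2 != a3 -> d1 != d2 -> d1 != d3 -> d2 != d3 ->
  linked k a1 d1 a2 d2 -> linked k a1 d1 a3 d3 -> linked k a2 d2 a3 d3 ->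
  [&& a1./2 < k, a2./2 < k, a3./2 < k & (a1./2 != a2./2) || (a1./2 != a3./2)].
Proof. rewrite /linked /special_pair => ? ? ? ? ? ?; do 3 (case/orP => /and3P [? /eqP ? ?]); lia. Qed.

(* A cross edge cannot be linked to three others: each of {a1, d} and {a, d1}
   special pins down a single partner edge. *)
Lemma linked4 k (a1 a2 a3 a4 d1 d2 d3 d4 : nat) :
  a2 != a3 -> a2 != a4 -> a3 != a4 -> d2 != d3 -> d2 != d4 -> d3 != d4 ->
  linked k a1 d1 a2 d2 -> linked k a1 d1 a3 d3 -> linked k a1 d1 a4 d4 -> False.
Proof. rewrite /linked /special_pair => ? ? ? ? ? ?; do 3 (case/orP => /and3P [? /eqP ? ?]); lia. Qed.

Lemma flat_flat_square k (i j i' j' : nat) : special_pair k i j -> special_pair k i' j' ->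
  ((i == i') || ~~ special_pair k i i') && ((j == j') || ~~ special_pair k j j') ||
  ((i == j') || ~~ special_pair k i j') && ((j == i') || ~~ special_pair k j i').
Proof. rewrite /special_pair => /and3P [? /eqP ? ?] /and3P [? /eqP ? ?]; lia. Qed.

Lemma negb_eq_self (c : bool) : (~~ c == c) = false.
Proof. by case: c. Qed.

Section LowerBound.
Variables n k : nat.
Local Notation V := (bool * 'I_n)%type.
Local Notation E := (Hk_adj n k).

Definition flat (c : bool) (x : {set V}) : bool := [forall p in x, p.1 == c].

Lemma flat_pair c p q : flat c [set p; q] = (p.1 == c) && (q.1 == c).
Proof.
apply/forallP/andP => [all_c|[pc qc] r]; last by apply/implyP; rewrite !inE => /orP [] /eqP ->.
by split; [move/implyP: (all_c p) | move/implyP: (all_c q)]; apply; rewrite !inE eqxx ?orbT.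
Qed.

Lemma edge_shape b x : is_edge E x ->
  (exists c (i j : 'I_n), special_pair k i j /\ x = [set (c, i); (c, j)]) \/
  (exists a d : 'I_n, ~~ special_pair k a d /\ x = [set (~~ b, a); (b, d)]).
Proof.
case/(edgeP Hk_irr) => [[p i]] [[q j]] [Epq _ ->].
have [eq_pq|pq] := eqVneq p q.
  by subst q; left; exists p, i, j; move: Epq; rewrite HkE eqxx.
right; move: Epq; rewrite HkE (negbTE pq) => Eij.
have nsp : ~~ special_pair k i j.
  by move: Eij; case: eqVneq => [->|_] //=; rewrite /special_pair eqxx.
have [pb|pb] := eqVneq p (~~ b).
  by exists i, j; split => //; move: pq; rewrite pb; case: (q); case: (b).
exists j, i; split; first by rewrite special_pair_sym.
by rewrite setUC; move: pq pb; case: (p); case: (q); case: (b).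
Qed.

Lemma no_flat_flat M S x y : perfect_matching E M -> forcing E M S ->
  x \in M :\: S -> y \in M :\: S -> flat false x -> flat true y -> False.
Proof.
move=> pM fS xD yD fx fy.
have xM : x \in M by case/setDP: xD.
have yM : y \in M by case/setDP: yD.
have [[c [i [j [sp xE]]]]|[a [d [_ xE]]]] := edge_shape true (pm_edge pM xM); last first.
  by move: fx; rewrite xE flat_pair.
have [[c' [i' [j' [sp' yE]]]]|[a [d [_ yE]]]] := edge_shape true (pm_edge pM yM); last first.
  by move: fy; rewrite yE flat_pair.
move: fx fy; rewrite xE yE !flat_pair /= !andbb => /eqP c0 /eqP c1; subst c c'.
have xy : x != y by apply/eqP => /setP /(_ (false, i)); rewrite xE yE !inE !xpair_eqE !eqxx.
rewrite xE yE in xD yD xy.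
case/orP: (flat_flat_square sp sp') => /andP [ii' jj'].
  by apply: (forcing_no_square Hk_irr pM fS xD yD xy); rewrite HkE.
rewrite [[set (true, i'); _]]setUC in yD xy.
by apply: (forcing_no_square Hk_irr pM fS xD yD xy); rewrite HkE.
Qed.

(* When no edge of D = M \ S is flat on side b, D has at most k + 1 edges:
   its flat edges (on side ~~ b) and the special pairs hit by the ~~ b-ends of
   its cross edges occupy distinct special pairs, and there are at most one
   more cross edges than such hit pairs. *)
Section SideBound.
Variables (M S : {set {set V}}) (b : bool).
Hypotheses (pM : perfect_matching E M) (fS : forcing E M S).
Hypothesis no_flat_b : forall x, x \in M :\: S -> ~~ flat b x.

Definition Dflat : {set {set V}} := [set x in M :\: S | flat (~~ b) x].
Definition Dcross : {set {set V}} := (M :\: S) :\: Dflat.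

Definition hit : {set 'I_k} :=
  [set s : 'I_k | [exists x in Dcross, exists a : 'I_n, ((~~ b, a) \in x) && (a./2 == s)]].

Lemma Dcross_D x : x \in Dcross -> x \in M :\: S.
Proof. by case/setDP. Qed.

Lemma D_uniq v x y : x \in M :\: S -> y \in M :\: S -> v \in x -> v \in y -> x = y.
Proof. by case/setDP => xM _ /setDP [yM _]; exact: pm_uniq pM xM yM. Qed.

Lemma Dflat_shape x : x \in Dflat ->
  exists i j : 'I_n, special_pair k i j /\ x = [set (~~ b, i); (~~ b, j)].
Proof.
rewrite inE => /andP [/setDP [xM _] fx].
case: (edge_shape b (pm_edge pM xM)) => [[c [i [j [sp xE]]]]|[a [d [_ xE]]]].
  by move: fx; rewrite xE flat_pair /= andbb => /eqP ->; exists i, j.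
by move: fx; rewrite xE flat_pair /= eqxx; case: (b).
Qed.

Lemma Dcross_shape x : x \in Dcross ->
  exists a d : 'I_n, x = [set (~~ b, a); (b, d)].
Proof.
case/setDP => xD; rewrite /Dflat inE xD /= => nfx.
have nfb := no_flat_b xD; case/setDP: xD => xM _.
case: (edge_shape b (pm_edge pM xM)) => [[c [i [j [sp xE]]]]|[a [d [_ xE]]]]; last by exists a, d.
by move: nfx nfb; rewrite xE !flat_pair /= !andbb; case: (b); case: (c).
Qed.

Lemma hitI x (a d : 'I_n) (ak : a./2 < k) :
  x \in Dcross -> x = [set (~~ b, a); (b, d)] -> Ordinal ak \in hit.
Proof.
move=> xC xE; rewrite inE; apply/exists_inP; exists x => //.
by apply/existsP; exists a; rewrite xE !inE !eqxx.
Qed.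

(* Claim 1: a flat edge of D fills its special pair on side ~~ b, so that
   pair is hit by no cross edge; flat edges and hit pairs are disjoint. *)
Lemma flat_hit_count : #|Dflat| + #|hit| <= k.
Proof.
pose pair_of (s : 'I_k) : {set V} := [set p : V | (p.1 == ~~ b) && (p.2./2 == s)].
have sub : Dflat \subset pair_of @: ~: hit.
  apply/subsetP => x xF; have [i [j [sp xE]]] := Dflat_shape xF.
  have ik : i./2 < k by move: sp; rewrite /special_pair => /and3P [].
  have xP : x = pair_of (Ordinal ik).
    rewrite xE; apply/setP => [[c l]]; rewrite !inE !xpair_eqE -!val_eqE /=.
    by move: sp; rewrite /special_pair; case: (c == ~~ b) => //= sp; apply/idP/idP; lia.
  apply/imsetP; exists (Ordinal ik) => //.
  rewrite in_setC inE; apply/negP => /exists_inP [y yC /existsP [a /andP [ay /eqP ha]]].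
  have ax : (~~ b, a) \in x by rewrite xP inE eqxx /= ha.
  have xD : x \in M :\: S by move: xF; rewrite inE => /andP [].
  have xy := D_uniq xD (Dcross_D yC) ax ay.
  by move: yC; rewrite -xy in_setD xF.
have := subset_leq_card sub; have := leq_imset_card pair_of (~: hit).
have := cardsC hit; rewrite card_ord.
by set f := #|Dflat|; set h := #|hit|; set im := #|_ @: _|; set c := #|~: hit|; lia.
Qed.

Lemma cross_link x y (a1 d1 a2 d2 : 'I_n) : x \in Dcross -> y \in Dcross -> x != y ->
  x = [set (~~ b, a1); (b, d1)] -> y = [set (~~ b, a2); (b, d2)] ->
  [&& a1 != a2 :> nat, d1 != d2 :> nat & linked k a1 d1 a2 d2].
Proof.
move=> /Dcross_D xD /Dcross_D yD xy xE yE; apply/and3P; split.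
- apply: contra xy => /eqP /val_inj a12; apply/eqP.
  by apply: (D_uniq (v := (~~ b, a1)) xD yD); rewrite ?xE ?yE ?a12 !inE eqxx.
- apply: contra xy => /eqP /val_inj d12; apply/eqP.
  by apply: (D_uniq (v := (b, d1)) xD yD); rewrite ?xE ?yE ?d12 !inE eqxx ?orbT.
apply/negPn/negP; rewrite negb_or => /andP [n12 n21].
have yD' : [set (b, d2); (~~ b, a2)] \in M :\: S by rewrite setUC -yE.
rewrite xE in xD xy; rewrite yE [X in _ != X]setUC in xy.
apply: (forcing_no_square Hk_irr pM fS xD yD' xy).
  by rewrite HkE negb_eq_self n12 orbT.
by rewrite HkE eq_sym negb_eq_self special_pair_sym n21 orbT.
Qed.

Lemma cross_two : 1 < #|Dcross| -> 0 < #|hit|.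
Proof.
case/card_gt1P => x [y [xC yC xy]].
have [a1 [d1 xE]] := Dcross_shape xC; have [a2 [d2 yE]] := Dcross_shape yC.
have /and3P [_ _ l12] := cross_link xC yC xy xE yE.
apply/card_gt0P; case/orP: (linked_low l12) => ak.
  by exists (Ordinal ak); exact: hitI xC xE.
by exists (Ordinal ak); exact: hitI yC yE.
Qed.

Lemma cross_three : 2 < #|Dcross| -> 1 < #|hit|.
Proof.
case/card_gt2P => x [y [z [[xC yC zC] [xy yz zx]]]].
have [a1 [d1 xE]] := Dcross_shape xC; have [a2 [d2 yE]] := Dcross_shape yC.
have [a3 [d3 zE]] := Dcross_shape zC.
have xz : x != z by rewrite eq_sym.
have /and3P [a12 d12 l12] := cross_link xC yC xy xE yE.
have /and3P [a13 d13 l13] := cross_link xC zC xz xE zE.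
have /and3P [a23 d23 l23] := cross_link yC zC yz yE zE.
have /and4P [k1 k2 k3 two_pairs] := linked3 a12 a13 a23 d12 d13 d23 l12 l13 l23.
apply/card_gt1P; case/orP: two_pairs => ne.
  exists (Ordinal k1), (Ordinal k2); split; [exact: hitI xC xE | exact: hitI yC yE |].
  by apply: contra ne => /eqP /(congr1 val) /= ->.
exists (Ordinal k1), (Ordinal k3); split; [exact: hitI xC xE | exact: hitI zC zE |].
by apply: contra ne => /eqP /(congr1 val) /= ->.
Qed.

Lemma cross_le3 : #|Dcross| <= 3.
Proof.
rewrite leqNgt; apply/negP => gt3.
have [x xC] : exists x, x \in Dcross by apply/card_gt0P; apply: leq_ltn_trans gt3.
have : 2 < #|Dcross :\ x| by move: gt3; rewrite (cardsD1 x) xC.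
case/card_gt2P => y [z [w [[]]]]; rewrite !in_setD1.
move=> /andP [yx yC] /andP [zx zC] /andP [wx wC] [yz zw wy].
have [a1 [d1 xE]] := Dcross_shape xC; have [a2 [d2 yE]] := Dcross_shape yC.
have [a3 [d3 zE]] := Dcross_shape zC; have [a4 [d4 wE]] := Dcross_shape wC.
have xy : x != y by rewrite eq_sym.
have xz : x != z by rewrite eq_sym.
have xw : x != w by rewrite eq_sym.
have yw : y != w by rewrite eq_sym.
have /and3P [_ _ l2] := cross_link xC yC xy xE yE.
have /and3P [_ _ l3] := cross_link xC zC xz xE zE.
have /and3P [_ _ l4] := cross_link xC wC xw xE wE.
have /and3P [a23 d23 _] := cross_link yC zC yz yE zE.
have /and3P [a24 d24 _] := cross_link yC wC yw yE wE.
have /and3P [a34 d34 _] := cross_link zC wC zw zE wE.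
exact: linked4 a23 a24 a34 d23 d24 d34 l2 l3 l4.
Qed.

Lemma cross_hit_count : #|Dcross| <= #|hit|.+1.
Proof. by have := cross_two; have := cross_three; have := cross_le3; lia. Qed.

Lemma side_bound : #|M :\: S| <= k.+1.
Proof.
have := cardsID Dflat (M :\: S).
rewrite (setIidPr _); last by apply/subsetP => x; rewrite inE => /andP [].
by have := flat_hit_count; have := cross_hit_count; rewrite /Dcross; lia.
Qed.
End SideBound.

(* By no_flat_flat some side carries no flat edge of D, so |M \ S| <= k + 1. *)
Lemma forcing_lower_bound M S : perfect_matching E M -> forcing E M S -> n - k - 1 <= #|S|.
Proof.
move=> pM fS; suff : #|M :\: S| <= k.+1.
  have := cardsID S M; rewrite (setIidPr (forcing_sub fS)) (Hk_pm_card pM).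
  by set d := #|M :\: S|; lia.
have [b no_flat] : exists b, forall x, x \in M :\: S -> ~~ flat b x.
  have [/exists_inP [x xD fx]|nf] := boolP [exists x in M :\: S, flat false x]; last first.
    by exists false => x xD; apply: contra nf => fx; apply/exists_inP; exists x.
  by exists true => y yD; apply/negP => fy; apply: no_flat_flat pM fS xD yD fx fy.
exact: side_bound pM fS no_flat.
Qed.

End LowerBound.

Theorem lemma5p6 (n k : nat) :
  1 <= n -> k <= (n - 1)./2 ->
  f_min (Hk_adj n k) = n - k - 1 /\
  (k = (n - 1)./2 ->
     f_min (Hk_adj n k) = n./2 /\ F_max (Hk_adj n k) = n - 1).
Proof.
move=> n_gt0 hk; have hk' : 2 * k < n by lia.
have fmin : f_min (Hk_adj n k) = n - k - 1.
  apply/eqP; rewrite eqn_leq; apply/andP; split.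
    apply: leq_trans (bigmin_le _ _ (Mstar_pm hk')) _.
    exact: leq_trans (fGM_le (Sstar_forcing hk')) (Sstar_card hk').
  apply: bigmin_ge => [|M pM]; first by rewrite card_prod card_bool card_ord; lia.
  apply: fGM_ge; first by rewrite (Hk_pm_card pM); lia.
  by move=> S; exact: forcing_lower_bound pM.
split=> // kE; split; first by rewrite fmin; lia.
exact: Fmax_Hk.
Qed.
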